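(* For a semigroup $X$ the following conditions are equivalent: (1) $\upsilon(X)$ is a finite semilattice; (2) $\upsilon(X)$ is an inverse semigroup; (3) the idempotents of the semigroup $\upsilon(X)$ commute, and $\upsilon(X)$ is sub-Clifford or regular; (4) $X$ is a finite linear semilattice, isomorphic to $L_n$ for some $n\in\omega$.
   Context: An upfamily on a set $X$ is a family $\mathcal F$ of nonempty subsets of $X$ such that $F\in\mathcal F$ and $F\subset E\subset X$ imply $E\in\mathcal F$; $\upsilon(X)$ is the set of all upfamilies on $X$. Each $x\in X$ is identified with $\langle x\rangle=\{A\subset X: x\in A\}$. For a family $\mathcal C$ of nonempty subsets, $\langle\mathcal C\rangle=\{A\subset X:\exists C\in\mathcal C,\ C\subset A\}$. For a semigroup $(X,* )$ the operation is extended to $\upsilon(X)$ by $\mathcal A*\mathcal B=\big\langle \bigcup_{a\in A} a*B_a : A\in\mathcal A,\ \{B_a\}_{a\in A}\subset\mathcal B\big\rangle$. A semilattice is a set with an associative, commutative, idempotent operation; a semigroup is linear if $xy\in\{x,y\}$ for all $x,y$. A semigroup $S$ is inverse if each $x$ has a unique $x^{-1}$ with $xx^{-1}x=x$, $x^{-1}xx^{-1}=x^{-1}$; regular if $x\in xSx$ for all $x$; sub-Clifford if it is a union of cancellative subsemigroups. $L_n=\{0,\dots,n-1\}$ with the operation $\min$ ($L_0=\emptyset$). *)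

From Stdlib Require Import Arith List.

Set Implicit Arguments.

Definition upfamily (X : Type) (F : (X -> Prop) -> Prop) : Prop :=
  (forall A, F A -> exists x, A x) /\
  (forall A B, F A -> (forall x, A x -> B x) -> F B).

Record upfam (X : Type) := Upfam {
  fam : (X -> Prop) -> Prop;
  fam_up : upfamily fam }.

(* A * B = < { U_{a in A} a * B_a : A in F, {B_a}_{a in A} subset G } > *)
Definition ext_mul (X : Type) (op : X -> X -> X)
    (F G : (X -> Prop) -> Prop) : (X -> Prop) -> Prop :=
  fun S => exists (A : X -> Prop) (Bf : X -> X -> Prop),
    F A /\ (forall a, A a -> G (Bf a)) /\
    (forall a b, A a -> Bf a b -> S (op a b)).

Lemma ext_mul_up (X : Type) (op : X -> X -> X) (F G : upfam X) :
  upfamily (ext_mul op (fam F) (fam G)).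
Proof.
  destruct F as [F [HF1 HF2]], G as [G [HG1 HG2]]; simpl.
  split.
  - intros S [A [Bf [HA [HB HS]]]].
    destruct (HF1 A HA) as [a Ha].
    destruct (HG1 (Bf a) (HB a Ha)) as [b Hb].
    exists (op a b). exact (HS a b Ha Hb).
  - intros S T [A [Bf [HA [HB HS]]]] HST.
    exists A, Bf. repeat split; auto.
Qed.

Definition umul (X : Type) (op : X -> X -> X) (F G : upfam X) : upfam X :=
  Upfam (ext_mul_up op F G).

Definition associative_op (T : Type) (m : T -> T -> T) : Prop :=
  forall x y z, m x (m y z) = m (m x y) z.

Definition finite_type (T : Type) : Prop :=
  exists l : list T, forall x, In x l.

Definition is_semilattice (T : Type) (m : T -> T -> T) : Prop :=
  associative_op m /\ (forall x y, m x y = m y x) /\ (forall x, m x x = x).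

Definition is_inverse_semigroup (T : Type) (m : T -> T -> T) : Prop :=
  associative_op m /\
  forall x, exists! y, m (m x y) x = x /\ m (m y x) y = y.

Definition idempotents_commute (T : Type) (m : T -> T -> T) : Prop :=
  forall e f, m e e = e -> m f f = f -> m e f = m f e.

Definition is_regular (T : Type) (m : T -> T -> T) : Prop :=
  forall x, exists y, m (m x y) x = x.

Definition cancellative_subsemigroup (T : Type) (m : T -> T -> T)
    (S : T -> Prop) : Prop :=
  (forall a b, S a -> S b -> S (m a b)) /\
  (forall a b c, S a -> S b -> S c -> m a b = m a c -> b = c) /\
  (forall a b c, S a -> S b -> S c -> m b a = m c a -> b = c).

(* sub-Clifford: a union of cancellative subsemigroups, i.e. every element
   lies in some cancellative subsemigroup *)
Definition is_subClifford (T : Type) (m : T -> T -> T) : Prop :=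
  forall x, exists S : T -> Prop, S x /\ cancellative_subsemigroup m S.

(* (X, op) is isomorphic to L_n = ({0,...,n-1}, min) *)
Definition iso_L (X : Type) (op : X -> X -> X) (n : nat) : Prop :=
  exists f : X -> nat,
    (forall x, f x < n) /\
    (forall x y, f x = f y -> x = y) /\
    (forall k, k < n -> exists x, f x = k) /\
    (forall x y, f (op x y) = Nat.min (f x) (f y)).

(* Everything rests on the fibre formula  S ∈ F*G  <->  {a | {b | S(ab)} ∈ G} ∈ F.
   (1)⇒(2)⇒(3) is abstract semigroup theory: a semilattice is inverse, and in
   an inverse semigroup the idempotents commute and every element is regular.
   (4)⇒(1): a finite set carries finitely many upfamilies, and over a chain
   the fibres {b | S(ab)} are totally ordered by inclusion, so a fibre of
   least extent witnesses that the product is commutative and idempotent.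

   Principal upfamilies embed X in υ(X), so the
   idempotents of X commute, and the upfamily of sets containing two
   idempotents e, f forces ef ∈ {e, f}.  For a sequence s of X we compare
   the upfamily of sets containing a tail of s with that of sets meeting s
   infinitely often: if s acts on itself by eventual translations, or
   eventually absorbs, these two are idempotents each acting as a one-sided
   identity on the other, so if they commute they are equal — impossible
   for an injective s.  Applied to the powers of x this makes some power of
   x stable, which together with sub-Cliffordness or regularity makes x
   idempotent; so X is a chain.
   Applied to strictly monotone sequences it shows that every nonempty
   subset of the chain has a least and a greatest element, so X is finite
   and ranking its elements gives the isomorphism with L_n. *)

From Stdlib Require Import Arith List Lia Classical ClassicalEpsilon
  FunctionalExtensionality PropExtensionality ProofIrrelevance FinFun.

Set Implicit Arguments.

(** * Upfamilies and their product *)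

Lemma upfam_ext (X : Type) (F G : upfam X) :
  (forall S, fam F S <-> fam G S) -> F = G.
Proof.
  destruct F as [f pf], G as [g pg]; simpl; intro H.
  assert (f = g) by (extensionality S; apply propositional_extensionality; apply H).
  subst g. f_equal. apply proof_irrelevance.
Qed.

Lemma up_nonempty (X : Type) {F : upfam X} {S : X -> Prop} :
  fam F S -> exists x, S x.
Proof. destruct F as [f [Hne Hup]]; simpl; apply Hne. Qed.

Lemma up_mono (X : Type) {F : upfam X} {S T : X -> Prop} :
  fam F S -> (forall x, S x -> T x) -> fam F T.
Proof. destruct F as [f [Hne Hup]]; simpl; apply Hup. Qed.

Lemma up_iff (X : Type) (F : upfam X) {S T : X -> Prop} :
  (forall x, S x <-> T x) -> (fam F S <-> fam F T).
Proof. intro H; split; intro HS; apply (up_mono HS); firstorder. Qed.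

Lemma umul_char (X : Type) (op : X -> X -> X) (F G : upfam X) S :
  fam (umul op F G) S <-> fam F (fun a => fam G (fun b => S (op a b))).
Proof.
  simpl; unfold ext_mul; split.
  - intros [A [Bf [HA [HB HS]]]]. apply (up_mono HA).
    intros a Ha. apply (up_mono (HB a Ha)). auto.
  - intro H. exists (fun a => fam G (fun b => S (op a b))), (fun a b => S (op a b)).
    auto.
Qed.

Lemma umul_assoc (X : Type) (op : X -> X -> X)
  (assoc : forall x y z, op x (op y z) = op (op x y) z) :
  associative_op (umul op).
Proof.
  intros F G H. apply upfam_ext; intro S.
  rewrite (umul_char op F (umul op G H)), (umul_char op (umul op F G) H),
    (umul_char op F G).
  apply up_iff; intro a. rewrite umul_char.
  apply up_iff; intro b. apply up_iff; intro c.
  rewrite assoc; tauto.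
Qed.

Lemma principal_up (X : Type) (x : X) : upfamily (fun S : X -> Prop => S x).
Proof. split; [intros A H; exists x; exact H | auto]. Qed.

Definition principal (X : Type) (x : X) : upfam X := Upfam (principal_up x).

Lemma principal_mul (X : Type) (op : X -> X -> X) x y :
  umul op (principal x) (principal y) = principal (op x y).
Proof. apply upfam_ext; intro S; rewrite umul_char; simpl; tauto. Qed.

Lemma principal_inj (X : Type) (x y : X) : principal x = principal y -> x = y.
Proof.
  intro H. assert (Hx : fam (principal x) (fun z => z = x)) by (simpl; auto).
  rewrite H in Hx. simpl in Hx. auto.
Qed.

(* Via the embedding x ↦ <x>, commuting idempotents pass from υ(X) to X. *)
Lemma idempotents_commute_base (X : Type) (op : X -> X -> X) :
  idempotents_commute (umul op) -> idempotents_commute op.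
Proof.
  intros HI e f He Hf. apply principal_inj. rewrite <- !principal_mul.
  apply HI; rewrite principal_mul; congruence.
Qed.

(** * Abstract semigroup theory: (1) ⇒ (2) ⇒ (3) *)

Definition is_inverse_of (T : Type) (m : T -> T -> T) (a y : T) : Prop :=
  m (m a y) a = a /\ m (m y a) y = y.

(* A semilattice is inverse: each x is its own unique inverse. *)
Lemma semilattice_inverse (T : Type) (m : T -> T -> T) :
  is_semilattice m -> is_inverse_semigroup m.
Proof.
  intros [assoc [comm idem]]. split; auto. intro x. exists x. split.
  - split; rewrite !idem; auto.
  - intros y [H1 H2].
    assert (E1 : m (m x y) x = m x y)
      by (rewrite <- assoc, (comm y x), assoc, idem; auto).
    assert (E2 : m (m y x) y = m x y)
      by (rewrite <- assoc, (comm x y), assoc, idem, comm; auto).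
    congruence.
Qed.

Lemma inverse_regular (T : Type) (m : T -> T -> T) :
  is_inverse_semigroup m -> is_regular m.
Proof. intros [_ Hinv] x. destruct (Hinv x) as [y [[Hy _] _]]. eauto. Qed.

Section InverseSemigroups.

Variables (T : Type) (m : T -> T -> T).
Hypothesis Hinv : is_inverse_semigroup m.

Let assoc : associative_op m := proj1 Hinv.

Lemma inverse_unique a y z :
  is_inverse_of m a y -> is_inverse_of m a z -> y = z.
Proof.
  intros Hy Hz. destruct (proj2 Hinv a) as [w [_ Hw]].
  rewrite <- (Hw y Hy). exact (Hw z Hz).
Qed.

Lemma idem_absorb e : m e e = e -> forall r, m e (m e r) = m e r.
Proof. intros He r. rewrite assoc, He; auto. Qed.

(* In an inverse semigroup a product of idempotents is idempotent: if x is
   the inverse of ef then so is fxe, whence x = fxe is idempotent and is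
   its own inverse as well as that of ef. *)
Lemma inverse_idempotent_product e f :
  m e e = e -> m f f = f -> m (m e f) (m e f) = m e f.
Proof.
  intros He Hf.
  destruct (proj2 Hinv (m e f)) as [x [[Hx1 Hx2] _]].
  assert (N1 : m e (m f (m x (m e f))) = m e f)
    by (repeat rewrite <- assoc in Hx1; exact Hx1).
  assert (N2 : m x (m e (m f (m x e))) = m x e).
  { transitivity (m (m (m x (m e f)) x) e); [repeat rewrite <- assoc | rewrite Hx2];
    reflexivity. }
  set (y := m (m f x) e).
  assert (Hy : is_inverse_of m (m e f) y).
  { unfold y; split; repeat rewrite <- assoc.
    - rewrite (idem_absorb Hf), (idem_absorb He). exact N1.
    - rewrite (idem_absorb He), (idem_absorb Hf), N2. reflexivity. }
  assert (Hyy : m y y = y) by (unfold y; repeat rewrite <- assoc; rewrite N2; auto).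
  assert (Exy : y = x) by (eapply inverse_unique; eauto; split; auto).
  rewrite Exy in Hyy.
  assert (Exef : x = m e f).
  { apply inverse_unique with (a := x); split; rewrite ?Hyy; auto. }
  rewrite <- Exef. exact Hyy.
Qed.

(* Idempotents commute: fe is an inverse of the idempotent ef, which is its
   own inverse. *)
Lemma inverse_idempotents_commute : idempotents_commute m.
Proof.
  intros e f He Hf.
  pose proof (inverse_idempotent_product He Hf) as Ief.
  pose proof (inverse_idempotent_product Hf He) as Ife.
  assert (N1 : m e (m f (m e f)) = m e f) by (rewrite assoc; exact Ief).
  assert (N2 : m f (m e (m f e)) = m f e) by (rewrite assoc; exact Ife).
  symmetry. apply inverse_unique with (a := m e f).
  - split; repeat rewrite <- assoc.
    + rewrite (idem_absorb Hf), (idem_absorb He). exact N1.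
    + rewrite (idem_absorb He), (idem_absorb Hf). exact N2.
  - split; rewrite !Ief; auto.
Qed.

End InverseSemigroups.

(** * Tails versus recurrence of a sequence *)

Section Sequences.

Variables (X : Type) (op : X -> X -> X) (s : nat -> X).

Lemma tails_up :
  upfamily (fun S : X -> Prop => exists k, forall n, k <= n -> S (s n)).
Proof.
  split.
  - intros A [k H]. exists (s k). apply H; lia.
  - intros A B [k H] HAB. exists k; auto.
Qed.

Definition tails : upfam X := Upfam tails_up.

Lemma often_up :
  upfamily (fun S : X -> Prop => forall k, exists n, k <= n /\ S (s n)).
Proof.
  split.
  - intros A H. destruct (H 0) as [n [_ Hn]]. eauto.
  - intros A B H HAB k. destruct (H k) as [n [? ?]]; eauto.
Qed.

Definition often : upfam X := Upfam often_up.

Definition carried (H : upfam X) : Prop :=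
  fam H (fun _ => True) /\
  forall T T', (forall n, T (s n) -> T' (s n)) -> fam H T -> fam H T'.

Lemma tails_carried : carried tails.
Proof.
  split; simpl.
  - exists 0; auto.
  - intros T T' HT [k Hk]. exists k; auto.
Qed.

Lemma often_carried : carried often.
Proof.
  split; simpl.
  - intro k; exists k; auto.
  - intros T T' HT Hk k. destruct (Hk k) as [n [? ?]]; eauto.
Qed.

Lemma carried_mul_invariant {H G : upfam X} :
  carried H -> (forall n S, fam G (fun b => S (op (s n) b)) <-> fam G S) ->
  umul op H G = G.
Proof.
  intros [Hfull Htrace] Hinv. apply upfam_ext; intro S. rewrite umul_char.
  split; intro HS.
  - apply NNPP; intro NS.
    assert (Hempty : fam H (fun _ => False)).
    { apply (Htrace _ _ (fun n Hn => NS (proj1 (Hinv n S) Hn)) HS). }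
    destruct (up_nonempty Hempty) as [_ []].
  - apply (Htrace (fun _ => True)); auto. intros n _. apply Hinv. exact HS.
Qed.

Lemma carried_mul_absorbing {H G : upfam X} :
  carried H -> (forall n S, fam G (fun b => S (op (s n) b)) <-> S (s n)) ->
  umul op H G = H.
Proof.
  intros [_ Htrace] Habs. apply upfam_ext; intro S. rewrite umul_char.
  split; apply Htrace; intro n; apply Habs.
Qed.

Definition translating : Prop :=
  forall n, exists c t, forall m, t <= m -> op (s n) (s m) = s (m + c).

Definition absorbing : Prop :=
  forall n, exists t, forall m, t <= m -> op (s n) (s m) = s n.

Lemma tails_translation_invariant : translating ->
  forall n S, fam tails (fun b => S (op (s n) b)) <-> fam tails S.
Proof.
  intros Htr n S. destruct (Htr n) as [c [t Ht]]. simpl. split.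
  - intros [k Hk]. exists (k + t + c). intros p Hp.
    specialize (Hk (p - c) ltac:(lia)). rewrite Ht in Hk by lia.
    replace (p - c + c) with p in Hk by lia. exact Hk.
  - intros [k Hk]. exists (k + t). intros m Hm. rewrite Ht by lia. apply Hk; lia.
Qed.

Lemma often_translation_invariant : translating ->
  forall n S, fam often (fun b => S (op (s n) b)) <-> fam often S.
Proof.
  intros Htr n S. destruct (Htr n) as [c [t Ht]]. simpl. split.
  - intros H k. destruct (H (k + t)) as [m [Hm HS]]. rewrite Ht in HS by lia.
    exists (m + c); split; [lia | exact HS].
  - intros H k. destruct (H (k + t + c)) as [p [Hp HS]].
    exists (p - c). split; [lia|]. rewrite Ht by lia.
    replace (p - c + c) with p by lia. exact HS.
Qed.

Lemma tails_absorbing : absorbing ->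
  forall n S, fam tails (fun b => S (op (s n) b)) <-> S (s n).
Proof.
  intros Hab n S. destruct (Hab n) as [t Ht]. simpl. split.
  - intros [k Hk]. specialize (Hk (k + t) ltac:(lia)). rewrite Ht in Hk by lia.
    exact Hk.
  - intro H. exists t. intros m Hm. rewrite Ht by lia. exact H.
Qed.

Lemma often_absorbing : absorbing ->
  forall n S, fam often (fun b => S (op (s n) b)) <-> S (s n).
Proof.
  intros Hab n S. destruct (Hab n) as [t Ht]. simpl. split.
  - intro H. destruct (H t) as [m [Hm HS]]. rewrite Ht in HS by lia. exact HS.
  - intros H k. exists (k + t). split; [lia|]. rewrite Ht by lia. exact H.
Qed.

(* tails and often are idempotents of υ(X), each a left identity for the
   other if s is translating and a right identity if s is absorbing; so
   when the idempotents of υ(X) commute they coincide. *)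
Lemma tails_eq_often :
  idempotents_commute (umul op) -> translating \/ absorbing -> tails = often.
Proof.
  intros HI [Htr | Hab].
  - pose proof (tails_translation_invariant Htr) as Ti.
    pose proof (often_translation_invariant Htr) as Oi.
    pose proof (HI _ _ (carried_mul_invariant tails_carried Ti)
                       (carried_mul_invariant often_carried Oi)) as C.
    rewrite (carried_mul_invariant tails_carried Oi),
      (carried_mul_invariant often_carried Ti) in C.
    symmetry; exact C.
  - pose proof (tails_absorbing Hab) as Ta.
    pose proof (often_absorbing Hab) as Oa.
    pose proof (HI _ _ (carried_mul_absorbing tails_carried Ta)
                       (carried_mul_absorbing often_carried Oa)) as C.
    rewrite (carried_mul_absorbing tails_carried Oa),
      (carried_mul_absorbing often_carried Ta) in C.
    exact C.
Qed.

(* For an injective s, the set of even-indexed terms meets s infinitely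
   often but contains no tail of s. *)
Lemma tails_ne_often : (forall n m, n < m -> s n <> s m) -> tails <> often.
Proof.
  intros Hinj E.
  set (Even := fun z => exists q, z = s (2 * q)).
  assert (HE : fam often Even).
  { intro k; exists (2 * k); split; [lia | exists k; auto]. }
  rewrite <- E in HE. destruct HE as [k Hk].
  destruct (Hk (2 * k + 1) ltac:(lia)) as [q Hq].
  destruct (Nat.lt_ge_cases (2 * k + 1) (2 * q)) as [L | L].
  - exact (Hinj _ _ L Hq).
  - exact (Hinj (2 * q) (2 * k + 1) ltac:(lia) (eq_sym Hq)).
Qed.

End Sequences.

(** * (3) ⇒ X is a linear semilattice *)

Section Band.

Variables (X : Type) (op : X -> X -> X).
Hypothesis assoc : forall x y z, op x (op y z) = op (op x y) z.

(* power x n is x^(n+1). *)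
Fixpoint power (x : X) (n : nat) : X :=
  match n with 0 => x | S n => op (power x n) x end.

Lemma power_add x n k : op (power x n) (power x k) = power x (n + k + 1).
Proof.
  induction k as [|k IH]; simpl.
  - replace (n + 0 + 1) with (S n) by lia. reflexivity.
  - rewrite assoc, IH. replace (n + S k + 1) with (S (n + k + 1)) by lia.
    reflexivity.
Qed.

Lemma power_succ_l x k : op x (power x k) = power x (S k).
Proof.
  pose proof (power_add x 0 k) as E; simpl in E. rewrite E. f_equal; lia.
Qed.

Lemma powers_translating x : translating op (power x).
Proof. intro n. exists (S n), 0. intros m _. rewrite power_add. f_equal; lia. Qed.

Lemma power_periodic x i j : i < j -> power x i = power x j ->
  forall c p, i <= p -> power x (p + c * (j - i)) = power x p.
Proof.
  intros Hij Eij.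
  assert (Hshift : forall r, power x (i + r) = power x (j + r)).
  { induction r as [|r IH].
    - rewrite !Nat.add_0_r; exact Eij.
    - rewrite !Nat.add_succ_r. simpl. rewrite IH. reflexivity. }
  induction c as [|c IH]; intros p Hp.
  - rewrite Nat.mul_0_l, Nat.add_0_r. reflexivity.
  - rewrite Nat.mul_succ_l. set (t := c * (j - i)).
    replace (p + (t + (j - i))) with (j + (p + t - i)) by lia.
    rewrite <- Hshift. replace (i + (p + t - i)) with (p + t) by lia.
    apply IH; exact Hp.
Qed.

Lemma often_idempotent_powers x i j : i < j -> power x i = power x j ->
  fam (often (power x)) (fun z => op z z = z).
Proof.
  intros Hij Eij k. set (n := (k + i + 1) * (j - i) - 1).
  exists n. split; [unfold n; nia|]. rewrite power_add.
  replace (n + n + 1) with (n + (k + i + 1) * (j - i)) by (unfold n; nia).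
  apply (power_periodic x Hij Eij). unfold n; nia.
Qed.

Lemma consecutive_idempotent_powers x n :
  op (power x n) (power x n) = power x n ->
  op (power x (S n)) (power x (S n)) = power x (S n) ->
  power x (S n) = power x (S (S n)).
Proof.
  intros He Hf. rewrite <- Hf at 1. rewrite power_add.
  replace (S n + S n + 1) with (S (S (n + n + 1))) by lia. simpl.
  rewrite <- power_add, He. reflexivity.
Qed.

(* If the idempotents of υ(X) commute, every x has a stable power: the
   powers of x are translating, so the recurrent sets of powers contain a
   tail; hence two powers coincide, idempotent powers recur, and then two
   consecutive powers are idempotent. *)
Lemma power_stabilizes : idempotents_commute (umul op) ->
  forall x, exists m, power x m = power x (S m).
Proof.
  intros HI x.
  pose proof (tails_eq_often HI (or_introl (powers_translating x))) as E.
  assert (Hrep : exists i j, i < j /\ power x i = power x j).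
  { apply NNPP; intro N. apply (tails_ne_often (s := power x)); [|exact E].
    intros n m Hnm Enm. apply N; eauto. }
  destruct Hrep as [i [j [Hij Eij]]].
  pose proof (often_idempotent_powers x Hij Eij) as Hrec.
  rewrite <- E in Hrec. destruct Hrec as [k Hk].
  exists (S k). apply consecutive_idempotent_powers; apply Hk; lia.
Qed.

Lemma power_stable_succ x m :
  power x m = power x (S m) -> power x (S m) = power x (S (S m)).
Proof. intro Hm. simpl. f_equal. exact Hm. Qed.

(* If x = u x² then x = v x^(k+1) for every k; a stable power then makes x
   idempotent. *)
Lemma idempotent_of_left_factor x u m :
  x = op u (op x x) -> power x m = power x (S m) -> op x x = x.
Proof.
  intros Hu Hm.
  assert (Hk : forall k, exists v, x = op v (power x (S k))).
  { induction k as [|k [v Hv]].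
    - exists u. exact Hu.
    - exists (op v u). rewrite <- assoc.
      replace (op u (power x (S (S k)))) with (power x (S k)); [exact Hv|].
      rewrite <- !power_succ_l, (assoc x x), (assoc u), <- Hu. reflexivity. }
  destruct (Hk m) as [v Hv].
  transitivity (op (op v (power x (S m))) x); [rewrite <- Hv; reflexivity|].
  rewrite <- assoc. change (op (power x (S m)) x) with (power x (S (S m))).
  rewrite <- (power_stable_succ Hm). symmetry; exact Hv.
Qed.

Lemma idempotent_of_right_factor x u m :
  x = op (op x x) u -> power x m = power x (S m) -> op x x = x.
Proof.
  intros Hu Hm.
  assert (Hk : forall k, exists v, x = op (power x (S k)) v).
  { induction k as [|k [v Hv]].
    - exists u. exact Hu.
    - exists (op u v). rewrite assoc.
      replace (op (power x (S (S k))) u) with (power x (S k)); [exact Hv|].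
      simpl. transitivity (op (power x k) (op (op x x) u)).
      + f_equal; exact Hu.
      + rewrite !assoc; reflexivity. }
  destruct (Hk m) as [v Hv].
  transitivity (op x (op (power x (S m)) v)); [rewrite <- Hv; reflexivity|].
  rewrite assoc, power_succ_l, <- (power_stable_succ Hm). symmetry; exact Hv.
Qed.

Lemma doubleton_up (e f : X) : upfamily (fun S : X -> Prop => S e /\ S f).
Proof. split; [intros A [H _]; exists e; exact H | intros A B [H1 H2] H3; auto]. Qed.

Definition doubleton (e f : X) : upfam X := Upfam (doubleton_up e f).

Lemma doubleton_mul_char e f G S :
  fam (umul op (doubleton e f) G) S <->
  fam G (fun b => S (op e b)) /\ fam G (fun b => S (op f b)).
Proof. rewrite umul_char. simpl. tauto. Qed.

Hypothesis HI : idempotents_commute (umul op).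

(* For commuting idempotents e, f the doubleton D = <{e, f}> satisfies
   D² = D³, both being the family of sets containing e, ef and f. *)
Lemma doubleton_square_cube e f : op e e = e -> op f f = f ->
  umul op (doubleton e f) (doubleton e f) =
  umul op (doubleton e f) (umul op (doubleton e f) (doubleton e f)).
Proof.
  intros He Hf.
  assert (Cef : op f e = op e f)
    by (symmetry; apply (idempotents_commute_base HI); auto).
  assert (Heef : op e (op e f) = op e f) by (rewrite assoc, He; auto).
  assert (Hfef : op f (op e f) = op e f) by (rewrite <- Cef, assoc, Hf; auto).
  apply upfam_ext; intro S. rewrite !doubleton_mul_char. simpl.
  repeat progress rewrite ?Cef, ?He, ?Hf, ?Heef, ?Hfef. tauto.
Qed.

(* Two idempotents of X are comparable: ef ∈ {e, f}.  In the sub-Clifford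
   case cancelling D² = D³ gives D = D²; in the regular case D = DGD
   provides b with ebf ∈ {e, f}. *)
Lemma idempotents_comparable e f :
  is_subClifford (umul op) \/ is_regular (umul op) ->
  op e e = e -> op f f = f -> op e f = e \/ op e f = f.
Proof.
  intros Hcr He Hf.
  set (D := doubleton e f).
  assert (HD : fam D (fun z => z = e \/ z = f)) by (simpl; auto).
  destruct Hcr as [HC | HR].
  - destruct (HC D) as [C [CD [Cclosed [Ccancel _]]]].
    assert (ED : D = umul op D D).
    { apply (Ccancel D); auto. apply doubleton_square_cube; auto. }
    rewrite ED in HD. apply doubleton_mul_char in HD. destruct HD as [[_ Hef] _].
    exact Hef.
  - destruct (HR D) as [G HG].
    rewrite <- HG, umul_char in HD. apply doubleton_mul_char in HD.
    destruct HD as [HD _]. destruct (up_nonempty HD) as [b [_ Hb]].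
    destruct Hb as [Hb | Hb].
    + left. rewrite <- Hb at 1. rewrite <- assoc, Hf. exact Hb.
    + right. rewrite <- Hb at 1. rewrite (assoc e (op e b) f), (assoc e e b), He.
      exact Hb.
Qed.

(* Sub-Clifford case: in a cancellative subsemigroup containing <x>,
   left cancellation pushes x^(m+1) = x^(m+2) down to x = x². *)
Lemma subClifford_idempotent x m :
  is_subClifford (umul op) -> power x m = power x (S m) -> op x x = x.
Proof.
  intros HC Hm. destruct (HC (principal x)) as [C [Cx [Cclosed [Ccancel _]]]].
  set (P := fun n => principal (power x n)).
  assert (PS : forall n, P (S n) = umul op (principal x) (P n)).
  { intro n. unfold P. rewrite principal_mul, power_succ_l. reflexivity. }
  assert (PC : forall n, C (P n)).
  { induction n as [|n IH]; [exact Cx | rewrite PS; auto]. }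
  assert (Hdown : forall n, P n = P (S n) -> P 0 = P 1).
  { induction n as [|n IH]; intro E; auto. apply IH.
    apply (Ccancel (principal x)); auto. rewrite <- !PS. exact E. }
  apply principal_inj. symmetry. apply (Hdown m). unfold P. rewrite Hm. reflexivity.
Qed.

(* Regular case: <x> = <x> G <x> provides b with xbx = x; the idempotents
   xb and bx are comparable, which writes x as u x² or as x² u. *)
Lemma regular_idempotent x m :
  is_regular (umul op) -> power x m = power x (S m) -> op x x = x.
Proof.
  intros HR Hm. destruct (HR (principal x)) as [G HG].
  assert (Hx : fam (principal x) (fun z => z = x)) by (simpl; auto).
  rewrite <- HG, !umul_char in Hx. simpl in Hx.
  destruct (up_nonempty Hx) as [b Hb].
  assert (Exb : op (op x b) (op x b) = op x b) by (rewrite assoc, Hb; auto).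
  assert (Ebx : op (op b x) (op b x) = op b x)
    by (rewrite (assoc (op b x) b x), <- (assoc b x b), <- (assoc b (op x b) x), Hb;
        auto).
  destruct (idempotents_comparable (or_intror HR) Exb Ebx) as [C1 | C1].
  - apply (@idempotent_of_left_factor x (op (op x b) b) m); [|exact Hm].
    symmetry. transitivity (op (op (op x b) (op b x)) x).
    + repeat rewrite <- assoc. reflexivity.
    + rewrite C1. exact Hb.
  - assert (C2 : op (op b x) (op x b) = op b x).
    { rewrite (idempotents_commute_base HI Ebx Exb). exact C1. }
    apply (@idempotent_of_right_factor x b m); [|exact Hm].
    transitivity (op x (op (op b x) (op x b))).
    + rewrite C2, assoc. symmetry; exact Hb.
    + transitivity (op (op (op (op x b) x) x) b).
      * repeat rewrite <- assoc. reflexivity.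
      * rewrite Hb. reflexivity.
Qed.

Lemma linear_semilattice_of_C3 :
  is_subClifford (umul op) \/ is_regular (umul op) ->
  is_semilattice op /\ (forall x y, op x y = x \/ op x y = y).
Proof.
  intros Hcr.
  assert (Hidem : forall x, op x x = x).
  { intro x. destruct (power_stabilizes HI x) as [m Hm].
    destruct Hcr as [HC | HR].
    - exact (subClifford_idempotent HC Hm).
    - exact (regular_idempotent HR Hm). }
  split; [split; [exact assoc | split; [|exact Hidem]]|].
  - intros x y. apply (idempotents_commute_base HI); auto.
  - intros x y. apply idempotents_comparable; auto.
Qed.

End Band.

(** * Order-theoretic facts *)

Lemma descending_sequence (T : Type) (R : T -> T -> Prop) {B : T -> Prop} {b0 : T} :
  B b0 -> (forall b, B b -> exists b', B b' /\ R b' b) ->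
  exists s : nat -> T, forall n, R (s (S n)) (s n).
Proof.
  intros Hb0 Hstep.
  assert (Hg : forall b, exists b', B b -> B b' /\ R b' b).
  { intro b. destruct (classic (B b)) as [Bb | Bb].
    - destruct (Hstep b Bb) as [b' Hb']. eauto.
    - exists b; tauto. }
  set (g := fun b => proj1_sig (constructive_indefinite_description _ (Hg b))).
  assert (Hgs : forall b, B b -> B (g b) /\ R (g b) b).
  { intros b Bb. unfold g.
    destruct (constructive_indefinite_description _ (Hg b)); simpl; auto. }
  assert (Hin : forall n, B (Nat.iter n g b0))
    by (induction n; simpl; auto; apply Hgs; auto).
  exists (fun n => Nat.iter n g b0). intro n. apply Hgs, Hin.
Qed.

Lemma minimal_element (T : Type) {R : T -> T -> Prop} {B : T -> Prop} {b0 : T} :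
  (forall s : nat -> T, ~ (forall n, R (s (S n)) (s n))) -> B b0 ->
  exists b, B b /\ forall b', B b' -> ~ R b' b.
Proof.
  intros Hwf Hb0. apply NNPP; intro Hnone.
  assert (Hstep : forall b, B b -> exists b', B b' /\ R b' b).
  { intros b Bb. apply NNPP; intro N. apply Hnone. exists b. split; auto.
    intros b' Bb' Rb'. apply N; eauto. }
  destruct (descending_sequence R Hb0 Hstep) as [s Hs].
  exact (Hwf s Hs).
Qed.

Lemma descending_chain (T : Type) {R : T -> T -> Prop} {s : nat -> T} :
  (forall a b c, R a b -> R b c -> R a c) -> (forall n, R (s (S n)) (s n)) ->
  forall n m, n < m -> R (s m) (s n).
Proof.
  intros Htrans Hs n m Hnm. induction Hnm as [|m Hnm IH]; auto.
  apply (Htrans _ (s m)); auto.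
Qed.

Section FiniteOrders.

Variables (T : Type) (le : T -> T -> Prop).
Hypothesis le_antisym : forall a b, le a b -> le b a -> a = b.
Hypothesis has_min : forall B : T -> Prop,
  (exists b, B b) -> exists b, B b /\ forall b', B b' -> le b b'.
Hypothesis has_max : forall B : T -> Prop,
  (exists b, B b) -> exists b, B b /\ forall b', B b' -> le b' b.

(* Every down-set is finite: otherwise take the least b with an infinite
   down-set; the largest c strictly below b has a finite down-set, and the
   down-set of b only adds b to it. *)
Lemma finite_downsets : forall z, exists l, forall w, le w z -> In w l.
Proof.
  set (fin := fun z => exists l, forall w, le w z -> In w l).
  apply NNPP; intro N. apply not_all_ex_not in N.
  destruct (has_min (fun z => ~ fin z) N) as [b [Bb Bmin]].
  apply Bb. destruct (classic (exists w, le w b /\ w <> b)) as [Ew | NEw].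
  - destruct (has_max _ Ew) as [c [[Hcb Ncb] Cmax]].
    assert (Fc : fin c).
    { apply NNPP; intro Nc. apply Ncb, le_antisym; auto. }
    destruct Fc as [l Hl]. exists (b :: l). intros w Hw.
    destruct (classic (w = b)) as [E | E]; [left; auto | right].
    apply Hl, Cmax. auto.
  - exists (b :: nil). intros w Hw. left.
    apply NNPP; intro E. apply NEw. exists w. auto.
Qed.

(* ...and the whole set is the down-set of its greatest element. *)
Lemma finite_of_min_max : finite_type T.
Proof.
  destruct (classic (exists x : T, True)) as [Ex | NEx].
  - destruct (has_max (fun _ => True) Ex) as [M [_ HM]].
    destruct (finite_downsets M) as [l Hl]. exists l. auto.
  - exists nil. intro x. apply NEx. eauto.
Qed.

End FiniteOrders.

Lemma filter_length_mono (A : Type) (p q : A -> bool) (l : list A) :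
  (forall w, p w = true -> q w = true) ->
  length (filter p l) <= length (filter q l).
Proof.
  intro H. induction l as [|a t IH]; simpl; auto.
  destruct (p a) eqn:Ep.
  - rewrite (H a Ep). simpl. lia.
  - destruct (q a); simpl; lia.
Qed.

Lemma filter_length_strict (A : Type) (p q : A -> bool) (l : list A) z :
  (forall w, p w = true -> q w = true) -> In z l -> p z = false -> q z = true ->
  length (filter p l) < length (filter q l).
Proof.
  intros H Hz Pz Qz. induction l as [|a t IH]; simpl in *; [contradiction|].
  destruct Hz as [E | Hz].
  - subst a. rewrite Pz, Qz. simpl. pose proof (filter_length_mono p q t H). lia.
  - specialize (IH Hz). destruct (p a) eqn:Ep.
    + rewrite (H a Ep). simpl. lia.
    + destruct (q a); simpl; lia.
Qed.

(** * Linear semilattices *)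

Section Chains.

Variables (X : Type) (op : X -> X -> X).
Hypothesis Hsl : is_semilattice op.
Hypothesis Hlin : forall x y, op x y = x \/ op x y = y.

Let assoc : associative_op op := proj1 Hsl.
Let comm : forall x y, op x y = op y x := proj1 (proj2 Hsl).
Let idem : forall x, op x x = x := proj2 (proj2 Hsl).

Definition below (a b : X) : Prop := op a b = a.

Definition strictly_below (a b : X) : Prop := below a b /\ a <> b.

Lemma below_trans a b c : below a b -> below b c -> below a c.
Proof. unfold below; intros H1 H2. rewrite <- H1, <- assoc, H2. auto. Qed.

Lemma below_antisym a b : below a b -> below b a -> a = b.
Proof. unfold below; intros H1 H2. rewrite <- H1, comm. auto. Qed.

Lemma below_total a b : below a b \/ below b a.
Proof.
  unfold below. destruct (Hlin a b) as [H | H]; auto. right. rewrite comm; auto.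
Qed.

Lemma below_of_not_strictly a b : ~ strictly_below b a -> below a b.
Proof.
  intro H. destruct (below_total a b) as [H1 | H1]; auto.
  destruct (classic (b = a)) as [E | E].
  - subst; apply idem.
  - exfalso; apply H; split; auto.
Qed.

Lemma strictly_below_trans a b c :
  strictly_below a b -> strictly_below b c -> strictly_below a c.
Proof.
  intros [Hab Nab] [Hbc Nbc]. split; [exact (below_trans Hab Hbc)|].
  intro E. subst c. apply Nab, below_antisym; auto.
Qed.

Section Rank.

Variable l : list X.
Hypothesis l_nodup : NoDup l.
Hypothesis l_full : forall x, In x l.

Definition strictly_below_dec (w x : X) : bool :=
  if excluded_middle_informative (strictly_below w x) then true else false.

Definition rank (x : X) : nat :=
  length (filter (fun w => strictly_below_dec w x) l).

Lemma strictly_below_dec_spec w x :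
  strictly_below_dec w x = true <-> strictly_below w x.
Proof.
  unfold strictly_below_dec.
  destruct (excluded_middle_informative _); split; intro; try discriminate; tauto.
Qed.

Lemma strictly_below_below w x y :
  strictly_below w x -> below x y -> strictly_below w y.
Proof.
  intros [Hwx Nwx] Hxy. split; [exact (below_trans Hwx Hxy)|].
  intro E; subst w. apply Nwx, below_antisym; auto.
Qed.

Lemma rank_mono x y : below x y -> rank x <= rank y.
Proof.
  intro Hxy. apply filter_length_mono. intros w Hw.
  apply strictly_below_dec_spec. apply strictly_below_dec_spec in Hw.
  exact (strictly_below_below Hw Hxy).
Qed.

Lemma not_strictly_below_self x : strictly_below_dec x x = false.
Proof.
  destruct (strictly_below_dec x x) eqn:E; auto.
  apply strictly_below_dec_spec in E. destruct E as [_ N]. congruence.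
Qed.

Lemma rank_strict x y : strictly_below x y -> rank x < rank y.
Proof.
  intros Hxy. apply filter_length_strict with (z := x); auto.
  - intros w Hw. apply strictly_below_dec_spec. apply strictly_below_dec_spec in Hw.
    exact (strictly_below_below Hw (proj1 Hxy)).
  - apply not_strictly_below_self.
  - apply strictly_below_dec_spec; exact Hxy.
Qed.

Lemma rank_inj x y : rank x = rank y -> x = y.
Proof.
  intro E. apply NNPP; intro N. destruct (below_total x y) as [H | H].
  - pose proof (rank_strict (conj H N)). lia.
  - pose proof (rank_strict (conj H (not_eq_sym N))). lia.
Qed.

Lemma rank_lt x : rank x < length l.
Proof.
  unfold rank. rewrite <- (filter_true l) at 2.
  apply filter_length_strict with (z := x); auto. apply not_strictly_below_self.
Qed.

(* The ranks fill {0, ..., |l| - 1}: |l| distinct values below |l|. *)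
Lemma rank_onto k : k < length l -> exists x, rank x = k.
Proof.
  intro Hk.
  assert (Hincl : incl (seq 0 (length l)) (map rank l)).
  { apply NoDup_length_incl.
    - apply Injective_map_NoDup; [intros a b; apply rank_inj | exact l_nodup].
    - rewrite length_map, length_seq. lia.
    - intros a Ha. apply in_map_iff in Ha. destruct Ha as [x [Ex _]]. subst a.
      apply in_seq. pose proof (rank_lt x). lia. }
  assert (Hk' : In k (seq 0 (length l))) by (apply in_seq; lia).
  apply Hincl, in_map_iff in Hk'. destruct Hk' as [x [Ex _]]. eauto.
Qed.

Lemma rank_min x y : rank (op x y) = Nat.min (rank x) (rank y).
Proof.
  destruct (Hlin x y) as [E | E]; rewrite E.
  - symmetry. apply Nat.min_l, rank_mono. exact E.
  - symmetry. apply Nat.min_r, rank_mono. unfold below. rewrite comm. exact E.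
Qed.

End Rank.

Lemma chain_iso_L : finite_type X -> exists n, iso_L op n.
Proof.
  intros [l Hl].
  set (l' := nodup (fun a b : X => excluded_middle_informative (a = b)) l).
  assert (Hfull : forall x, In x l') by (intro x; apply nodup_In; auto).
  exists (length l'), (rank l'). repeat split.
  - intro x. apply rank_lt; auto.
  - apply rank_inj; exact Hfull.
  - apply rank_onto; [apply NoDup_nodup | exact Hfull].
  - apply rank_min.
Qed.

Hypothesis HI : idempotents_commute (umul op).

(* A strictly descending sequence translates (by 0), hence cannot exist. *)
Lemma no_descending_sequence (s : nat -> X) :
  ~ (forall n, strictly_below (s (S n)) (s n)).
Proof.
  intro Hs. pose proof (descending_chain strictly_below_trans Hs) as Hlt.
  apply (tails_ne_often (s := s)).
  - intros n m Hnm E. apply (proj2 (Hlt n m Hnm)). auto.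
  - apply (tails_eq_often HI). left. intro n. exists 0, n. intros m Hm.
    rewrite Nat.add_0_r, comm.
    destruct (Nat.eq_dec n m) as [E | Hnm]; [subst; apply idem|].
    apply (Hlt n m); lia.
Qed.

(* A strictly ascending sequence eventually absorbs, hence cannot exist. *)
Lemma no_ascending_sequence (s : nat -> X) :
  ~ (forall n, strictly_below (s n) (s (S n))).
Proof.
  intro Hs.
  assert (Hlt : forall n m, n < m -> strictly_below (s n) (s m)).
  { apply (descending_chain (R := fun a b => strictly_below b a)); auto.
    intros a b c Hab Hbc. exact (strictly_below_trans Hbc Hab). }
  apply (tails_ne_often (s := s)).
  - intros n m Hnm E. apply (proj2 (Hlt n m Hnm)). auto.
  - apply (tails_eq_often HI). right. intro n. exists n. intros m Hm.
    destruct (Nat.eq_dec n m) as [E | Hnm]; [subst; apply idem|].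
    apply (Hlt n m); lia.
Qed.

Lemma chain_finite : finite_type X.
Proof.
  apply (@finite_of_min_max X below below_antisym).
  - intros B [b0 Hb0].
    destruct (minimal_element no_descending_sequence Hb0) as [b [Bb Hb]].
    exists b. split; auto. intros b' Bb'. apply below_of_not_strictly, Hb, Bb'.
  - intros B [b0 Hb0].
    destruct (minimal_element (R := fun a b => strictly_below b a)
                no_ascending_sequence Hb0) as [b [Bb Hb]].
    exists b. split; auto. intros b' Bb'. apply below_of_not_strictly, Hb, Bb'.
Qed.

End Chains.

(** * (4) ⇒ (1) *)

Fixpoint sublists (A : Type) (l : list A) : list (list A) :=
  match l with
  | nil => nil :: nil
  | a :: t => map (cons a) (sublists t) ++ sublists t
  end.

Lemma filter_in_sublists (A : Type) (p : A -> bool) (l : list A) :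
  In (filter p l) (sublists l).
Proof.
  induction l as [|a t IH]; simpl; auto. apply in_or_app.
  destruct (p a); [left; apply in_map | right]; auto.
Qed.

Lemma finite_of_injection (A B : Type) (a0 : A) (f : A -> B) (L : list B) :
  (forall a, In (f a) L) -> (forall a a', f a = f a' -> a = a') -> finite_type A.
Proof.
  intros HL Hinj.
  set (pick := fun b => epsilon (inhabits a0) (fun a => f a = b)).
  exists (map pick L). intro a. apply in_map_iff. exists (f a). split; auto.
  apply Hinj. unfold pick.
  apply (epsilon_spec (inhabits a0) (fun a' => f a' = f a)). eauto.
Qed.

Lemma empty_up (X : Type) : upfamily (fun _ : X -> Prop => False).
Proof. split; intros; contradiction. Qed.

(* Over a finite X, an upfamily is determined by which sublists of an
   enumeration of X (read as subsets) it contains, so υ(X) is finite. *)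
Lemma upfam_finite (X : Type) : finite_type X -> finite_type (upfam X).
Proof.
  intros [l Hl].
  set (dec := fun (P : Prop) => if excluded_middle_informative P then true else false).
  assert (Hdec : forall P, dec P = true <-> P).
  { intro P. unfold dec.
    destruct (excluded_middle_informative P); split; intro; try discriminate; tauto. }
  set (trace := fun S : X -> Prop => filter (fun x => dec (S x)) l).
  assert (Htrace : forall S x, In x (trace S) <-> S x).
  { intros S x. unfold trace. rewrite filter_In, Hdec. intuition. }
  set (code := fun F : upfam X => filter (fun c => dec (fam F (fun x => In x c)))
                                         (sublists l)).
  assert (Hcode : forall (F : upfam X) S, fam F S <-> In (trace S) (code F)).
  { intros F S.
    rewrite (up_iff F (fun x => iff_sym (Htrace S x))). unfold code.
    rewrite filter_In, Hdec.
    split; [intro H; split; auto; apply filter_in_sublists | tauto]. }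
  apply (finite_of_injection (Upfam (empty_up X)) code (sublists (sublists l))).
  - intro F. apply filter_in_sublists.
  - intros F G E. apply upfam_ext. intro S. rewrite !Hcode, E. tauto.
Qed.

Lemma list_least (T : Type) (R : T -> T -> Prop) :
  (forall a b, R a b \/ R b a) -> (forall a b c, R a b -> R b c -> R a c) ->
  forall (P : T -> Prop) (l : list T), (exists a, In a l /\ P a) ->
  exists p, P p /\ forall a, In a l -> P a -> R p a.
Proof.
  intros Htot Htrans P l.
  assert (Hrefl : forall a, R a a) by (intro b; destruct (Htot b b); auto).
  induction l as [|a0 t IH]; intros [a [Ia Pa]]; [destruct Ia|].
  destruct (classic (exists a, In a t /\ P a)) as [Et | NEt].
  - destruct (IH Et) as [p [Pp Hp]].
    destruct (classic (P a0)) as [P0 | P0]; [destruct (Htot p a0) as [C | C] |].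
    + exists p. split; auto. intros a' [E | I] Pa'; [subst; auto | auto].
    + exists a0. split; auto. intros a' [E | I] Pa'; [subst; auto | eauto].
    + exists p. split; auto. intros a' [E | I] Pa'; [subst; contradiction | auto].
  - destruct Ia as [E | Ia]; [subst a0 | exfalso; eauto].
    exists a. split; auto. intros a' [E | I] Pa'; [subst; auto | exfalso; eauto].
Qed.

Section ChainProducts.

Variables (X : Type) (op : X -> X -> X).
Hypothesis Hsl : is_semilattice op.
Hypothesis Hlin : forall x y, op x y = x \/ op x y = y.

Let assoc : associative_op op := proj1 Hsl.
Let comm : forall x y, op x y = op y x := proj1 (proj2 Hsl).

Definition fibre_le (S : X -> Prop) (a a' : X) : Prop :=
  forall b, S (op a b) -> S (op a' b).

(* Over a chain the fibres are totally ordered by inclusion: for a ≤ a'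
   they differ only above a, where the fibre of a is constantly S(a). *)
Lemma fibres_total S a a' : fibre_le S a a' \/ fibre_le S a' a.
Proof.
  assert (K : forall a a', op a a' = a -> fibre_le S a a' \/ fibre_le S a' a).
  { clear a a'. intros a a' E.
    assert (Habove : forall b, op a b = b -> op a' b = b).
    { intros b Hb. rewrite <- Hb at 1. rewrite assoc, (comm a' a), E. exact Hb. }
    destruct (classic (S a)) as [Sa | Sa].
    - right. intros b Hb. destruct (Hlin a b) as [E1 | E1]; rewrite E1; auto.
      rewrite (Habove b E1) in Hb. exact Hb.
    - left. intros b Hb. destruct (Hlin a b) as [E1 | E1]; rewrite E1 in Hb;
        [contradiction|].
      rewrite (Habove b E1). exact Hb. }
  destruct (Hlin a a') as [E | E]; auto.
  rewrite comm in E. destruct (K a' a E); auto.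
Qed.

Lemma least_fibre S {P : X -> Prop} : finite_type X -> (exists a, P a) ->
  exists p, P p /\ forall a, P a -> fibre_le S p a.
Proof.
  intros [l Hl] [a Pa].
  assert (Htrans : forall a b c, fibre_le S a b -> fibre_le S b c -> fibre_le S a c)
    by (unfold fibre_le; auto).
  destruct (list_least (fibre_le S) (fibres_total S) Htrans P l
              (ex_intro _ a (conj (Hl a) Pa))) as [p [Pp Hp]].
  exists p. auto.
Qed.

(* Over a finite chain υ(X) is commutative: if S ∈ F*G, the least fibre
   S_p among those in G lies in G, and each b ∈ S_p has {a | S(ab)} ∈ F. *)
Lemma umul_comm_chain : finite_type X ->
  forall F G : upfam X, umul op F G = umul op G F.
Proof.
  intros Hfin.
  assert (One : forall F G S, fam (umul op F G) S -> fam (umul op G F) S).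
  { intros F G S H. rewrite umul_char in *.
    destruct (least_fibre S Hfin (up_nonempty H)) as [p [Pp Hp]].
    apply (up_mono Pp). intros b Hb.
    apply (up_mono H). intros a Pa. rewrite comm. exact (Hp a Pa b Hb). }
  intros F G. apply upfam_ext; intro S; split; apply One.
Qed.

(* Over a finite chain υ(X) is idempotent: S ⊆ {a | S_a ∈ F} since ab ∈
   {a, b}; conversely the least fibre S_p ∈ F lies inside S unless S
   contains every a with S_a ∈ F. *)
Lemma umul_idem_chain : finite_type X -> forall F : upfam X, umul op F F = F.
Proof.
  intros Hfin F. apply upfam_ext; intro S. rewrite umul_char. split; intro H.
  - destruct (least_fibre S Hfin (up_nonempty H)) as [p [Pp Hp]].
    destruct (classic (exists a, fam F (fun b => S (op a b)) /\ ~ S a))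
      as [[a [Pa Na]] | NE].
    + apply (up_mono Pp). intros b Hb. specialize (Hp a Pa b Hb).
      destruct (Hlin a b) as [E | E]; rewrite E in Hp; tauto.
    + apply (up_mono H). intros a Pa. apply NNPP; intro Na. apply NE; eauto.
  - apply (up_mono H). intros a Sa. apply (up_mono H).
    intros b Sb. destruct (Hlin a b) as [E | E]; rewrite E; auto.
Qed.

End ChainProducts.

Unset Implicit Arguments.

Theorem theorem1p4 (X : Type) (op : X -> X -> X)
  (Hassoc : forall x y z, op x (op y z) = op (op x y) z) :
  let C1 := finite_type (upfam X) /\ is_semilattice (umul op) in
  let C2 := is_inverse_semigroup (umul op) in
  let C3 := idempotents_commute (umul op) /\
            (is_subClifford (umul op) \/ is_regular (umul op)) in
  let C4 := is_semilattice op /\ (forall x y, op x y = x \/ op x y = y) /\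
            finite_type X /\ exists n : nat, iso_L op n in
  (C1 <-> C2) /\ (C2 <-> C3) /\ (C3 <-> C4).
Proof.
  intros C1 C2 C3 C4.
  assert (h12 : C1 -> C2) by (intros [_ Hsl]; exact (semilattice_inverse Hsl)).
  assert (h23 : C2 -> C3).
  { intro Hinv. split.
    - exact (inverse_idempotents_commute Hinv).
    - right. exact (inverse_regular Hinv). }
  assert (h34 : C3 -> C4).
  { intros [HI Hcr]. destruct (linear_semilattice_of_C3 Hassoc HI Hcr) as [Hsl Hlin].
    pose proof (chain_finite Hsl Hlin HI) as Hfin.
    exact (conj Hsl (conj Hlin (conj Hfin (chain_iso_L Hsl Hlin Hfin)))). }
  assert (h41 : C4 -> C1).
  { intros [Hsl [Hlin [Hfin _]]]. split; [exact (upfam_finite Hfin)|].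
    split; [exact (umul_assoc op Hassoc)|]. split.
    - exact (umul_comm_chain Hsl Hlin Hfin).
    - exact (umul_idem_chain Hsl Hlin Hfin). }
  tauto.
Qed.
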